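(* Let $\mathcal G$ be a finite group whose action on $\mathrm{Her}_{\tilde{\mathcal V}}$ satisfies $g\cdot I_{\tilde{\mathcal V}}=I_{\tilde{\mathcal V}}$ for all $g\in\mathcal G$. Assume $\mathcal S=\mathcal S_G$ and that Problem (P) is $\mathcal G$-symmetric. Assume further that for each $t\in\{1,\dots,T\}$ there is a subgroup $\mathcal H^{(t)}\subseteq\mathcal G$ and an irreducible projective (unitary or anti-unitary) representation $\mathcal H^{(t)}\ni h\mapsto U'_{h,t}$ on $\mathcal V_t$ such that for all $h\in\mathcal H^{(t)}$ and $X\in\mathrm{Her}_{\tilde{\mathcal V}}$, $$\mathrm{Tr}_{\mathcal W_T\otimes\mathcal V_T\otimes\cdots\otimes\mathcal V_{t+1}\otimes\mathcal W_t}(h\cdot X)=(\mathrm{Ad}_{U'_{h,t}}\otimes\mathrm{id}_{\mathcal W_{t-1}\otimes\mathcal V_{t-1}\otimes\cdots\otimes\mathcal W_1\otimes\mathcal V_1})\big(\mathrm{Tr}_{\mathcal W_T\otimes\mathcal V_T\otimes\cdots\otimes\mathcal V_{t+1}\otimes\mathcal W_t}X\big).$$ Then the optimal value of Problem (P) equals the optimal value obtained when $\mathcal S$ is replaced by $\mathcal S_\Psi:=\{I_{\tilde{\mathcal V}}/\prod_{t=1}^TN_{\mathcal V_t}\}$, i.e. $\sup_{\Phi\in\mathsf P}P(\Phi)=\sup\{P(\Phi):\Phi\in\mathcal C,\ \sum_m\Phi_m=I_{\tilde{\mathcal V}}/\prod_{t}N_{\mathcal V_t},\ \eta_j(\Phi)\le0\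 \forall j\}$.
   Context: Standing setup. All Hilbert spaces are finite-dimensional complex. Fix an integer $T\ge1$ and systems $\mathcal V_1,\dots,\mathcal V_T,\mathcal W_1,\dots,\mathcal W_T$; set $\mathcal W_0:=\mathbb C$ and $\tilde{\mathcal V}:=\mathcal W_T\otimes\mathcal V_T\otimes\cdots\otimes\mathcal W_1\otimes\mathcal V_1$. $N_{\mathcal X}$ is the dimension of $\mathcal X$; $\mathrm{Her}_{\mathcal X}$ is the real Hilbert space of Hermitian operators on $\mathcal X$ with inner product $\langle X,Y\rangle=\mathrm{Tr}(XY)$, $\mathrm{Pos}_{\mathcal X}$ the positive semidefinite operators, $I_{\mathcal X}$ the identity, $\mathrm{Tr}_{\mathcal X}$ partial trace; $\overline A$ is closure. $\mathcal I_n:=\{0,\dots,n-1\}$. $\mathcal S_G$ is the set of operators $I_{\mathcal W_T}\otimes\tau_T$ where $\tau_t\in\mathrm{Pos}_{\mathcal V_t\otimes\mathcal W_{t-1}\otimes\mathcal V_{t-1}\otimes\cdots\otimes\mathcal W_1\otimes\mathcal V_1}$ ($t=1,\dots,T$) satisfy $\mathrm{Tr}\,\tau_1=1$ and $\mathrm{Tr}_{\mathcal V_t}\tau_t=I_{\mathcal W_{t-1}}\otimes\tau_{t-1}$ for $2\le t\le T$. Fix $M\ge2$; $\mathcal C_G:=\mathrm{Pos}_{\tilde{\mathcal V}}^M$; $\mathcal T_G:=\{\Phi=\{\Phi_m\}_{m=0}^{M-1}\in\mathcal C_G:\sum_m\Phi_m\in\mathcal S_G\}$. Data: $J\ge0$,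 $c_m,a_{j,m}\in\mathrm{Her}_{\tilde{\mathcal V}}$, $b_j\in\mathbb R$; $\eta_j(\Phi):=\sum_m\langle\Phi_m,a_{j,m}\rangle-b_j$, $P(\Phi):=\sum_m\langle\Phi_m,c_m\rangle$. $\mathcal T$ is a nonempty convex subset of $\mathcal T_G$, $\mathsf P:=\{\Phi\in\mathcal T:\eta_j(\Phi)\le0\ \forall j\}$ (assumed to satisfy $\overline{\mathsf P}=\{\Phi\in\overline{\mathcal T}:\eta_j(\Phi)\le0\ \forall j\}$); $\mathcal C\subseteq\mathcal C_G$ a closed convex cone and $\mathcal S\subseteq\mathcal S_G$ a closed convex set with $\overline{\mathcal T}=\{\Phi\in\mathcal C:\sum_m\Phi_m\in\mathcal S\}$. Problem (P): maximize $P(\Phi)$ over $\Phi\in\mathsf P$ (value $\sup$, $-\infty$ if empty). Symmetry: for a finite group $\mathcal G$, Problem (P) is $\mathcal G$-symmetric if (a) there are group actions $x\mapsto g\cdot x$ (with $(gh)\cdot x=g\cdot(h\cdot x)$, $e\cdot x=x$) of $\mathcal G$ on $\mathcal I_M$, on $\mathcal I_J$ and on $\mathrm{Her}_{\tilde{\mathcal V}}$; (b) each map $x\mapsto g\cdot x$ on $\mathrm{Her}_{\tilde{\mathcal V}}$ is linear with $\langle g\cdot x,g\cdot y\rangle=\langle x,y\rangle$; (c) for all $g,j,m$: $\Phi^{(g)}\in\mathcal T$ for $\Phi\in\mathcal T$, $\Phi^{(g)}\in\mathcal C$ for $\Phi\in\mathcal C$, $g\cdot\varphi\in\mathcal S$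 for $\varphi\in\mathcal S$, $g\cdot a_{j,m}=a_{g\cdot j,g\cdot m}$, $b_j=b_{g\cdot j}$, $g\cdot c_m=c_{g\cdot m}$, where $\Phi^{(g)}:=\{g^{-1}\cdot\Phi_{g\cdot m}\}_m$. Representations: for $U$ a unitary or anti-unitary operator on $\mathcal X$, $\mathrm{Ad}_U(X):=UXU^\dagger$. A map $h\mapsto U_h$ from a group to unitary or anti-unitary operators on $\mathcal X$ is a projective (unitary or anti-unitary) representation if $\mathrm{Ad}_{U_e}=\mathrm{id}$ and $\mathrm{Ad}_{U_h}\circ\mathrm{Ad}_{U_{h'}}=\mathrm{Ad}_{U_{hh'}}$ for all $h,h'$; it is irreducible if the only subspaces of $\mathcal X$ invariant under all $U_h$ are $\{0\}$ and $\mathcal X$. *)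

From HB Require Import structures.
From mathcomp Require Import all_boot all_order all_algebra all_fingroup.
From mathcomp Require Import complex.
From mathcomp Require Import boolp classical_sets reals constructive_ereal ereal.
Set Implicit Arguments. Unset Strict Implicit. Unset Printing Implicit Defensive.
Import Order.TTheory GRing.Theory Num.Theory.
Local Open Scope ring_scope.
Local Open Scope classical_set_scope.

(* Linear algebra on a finite-dimensional complex Hilbert space whose        *)
(* orthonormal basis is indexed by a finite type A.  The scalars are         *)
Section LinAlg.
Variable R : realType.
Local Notation C := (complex R).

Definition op (A : finType) := A -> A -> C.
Definition vec (A : finType) := A -> C.

Definition rC (r : R) : C := Complex r 0.

Definition opI (A : finType) : op A := fun i j => (i == j)%:R.
Definition op0 (A : finType) : op A := fun _ _ => 0.
Definition opadd (A : finType) (X Y : op A) : op A := fun i j => X i j + Y i j.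
Definition opscale (A : finType) (r : R) (X : op A) : op A := fun i j => rC r * X i j.
Definition opmul (A : finType) (X Y : op A) : op A :=
  fun i j => \sum_(k : A) X i k * Y k j.
Definition adj (A : finType) (X : op A) : op A := fun i j => conjc (X j i).
Definition opconj (A : finType) (X : op A) : op A := fun i j => conjc (X i j).
Definition tr (A : finType) (X : op A) : C := \sum_(i : A) X i i.
(* Hilbert-Schmidt inner product <X,Y> = Tr (X Y) on Hermitian operators *)
Definition hs (A : finType) (X Y : op A) : C := tr (opmul X Y).
Definition herm (A : finType) (X : op A) : Prop := forall i j, X i j = conjc (X j i).
Definition psd (A : finType) (X : op A) : Prop :=
  herm X /\ forall v : vec A, 0 <= \sum_(i : A) \sum_(j : A) conjc (v i) * X i j * v j.
Definition apply (A : finType) (X : op A) (v : vec A) : vec A :=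
  fun i => \sum_(j : A) X i j * v j.

(* tensor product and partial trace over / partial transpose of the LEFT factor *)
Definition tens (A B : finType) (X : op A) (Y : op B) : op (A * B)%type :=
  fun p q => X p.1 q.1 * Y p.2 q.2.
Definition trL (A B : finType) (X : op (A * B)%type) : op B :=
  fun b b' => \sum_(a : A) X (a, b) (a, b').
Definition ptransL (A B : finType) (X : op (A * B)%type) : op (A * B)%type :=
  fun p q => X (q.1, p.2) (p.1, q.2).

(* (W, false) is the unitary W; (W, true) is the anti-unitary W o K where K is
   complex conjugation in the computational basis. *)
Definition uop (A : finType) := (op A * bool)%type.
Definition is_uop (A : finType) (U : uop A) : Prop :=
  opmul U.1 (adj U.1) = @opI A /\ opmul (adj U.1) U.1 = @opI A.
Definition uapply (A : finType) (U : uop A) (v : vec A) : vec A :=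
  apply U.1 (if U.2 then (fun i => conjc (v i)) else v).
Definition Ad (A : finType) (U : uop A) (X : op A) : op A :=
  opmul (opmul U.1 (if U.2 then opconj X else X)) (adj U.1).
(* Ad_U (x) id on Her(A (x) B): the real-linear extension; for anti-unitary U
   it acts as W (.)^T W^dagger on the A factor, i.e. via the partial transpose. *)
Definition Ad_id (A B : finType) (U : uop A) (Y : op (A * B)%type) : op (A * B)%type :=
  opmul (opmul (tens U.1 (@opI B)) (if U.2 then ptransL Y else Y)) (adj (tens U.1 (@opI B))).

Definition subspace (A : finType) (P : vec A -> Prop) : Prop :=
  P (fun _ => 0) /\ (forall u v, P u -> P v -> P (fun i => u i + v i)) /\
  (forall (a : C) v, P v -> P (fun i => a * v i)).

Definition proj_rep (gT : finGroupType) (H : {group gT}) (A : finType)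
    (U : gT -> uop A) : Prop :=
  (forall h, h \in H -> is_uop (U h)) /\
  (forall X, Ad (U 1%g) X = X) /\
  (forall h h', h \in H -> h' \in H -> forall X, Ad (U h) (Ad (U h') X) = Ad (U (h * h')%g) X).

Definition irreducible_rep (gT : finGroupType) (H : {group gT}) (A : finType)
    (U : gT -> uop A) : Prop :=
  forall P : vec A -> Prop, subspace P ->
    (forall h, h \in H -> forall v, P v -> P (uapply (U h) v)) ->
    (forall v, P v -> v = (fun _ => 0)) \/ (forall v, P v).

Definition tup (M : nat) (A : finType) := 'I_M -> op A.
Definition tsum (M : nat) (A : finType) (Phi : tup M A) : op A :=
  fun i j => \sum_(m < M) Phi m i j.
(* closure in the (finite-dimensional, hence unique) norm topology *)
Definition tclosure (M : nat) (A : finType) (S : set (tup M A)) : set (tup M A) :=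
  [set Phi | forall e : R, 0 < e -> exists Psi, S Psi /\
      forall m i j, `|Phi m i j - Psi m i j| < rC e].
Definition tclosed (M : nat) (A : finType) (S : set (tup M A)) : Prop :=
  tclosure S `<=` S.
Definition tconvex (M : nat) (A : finType) (S : set (tup M A)) : Prop :=
  forall Phi Psi (l : R), S Phi -> S Psi -> 0 <= l <= 1 ->
    S (fun m => opadd (opscale l (Phi m)) (opscale (1 - l) (Psi m))).
Definition tcone (M : nat) (A : finType) (S : set (tup M A)) : Prop :=
  forall Phi (l : R), S Phi -> 0 <= l -> S (fun m => opscale l (Phi m)).
Definition oclosed (A : finType) (S : set (op A)) : Prop :=
  forall X, (forall e : R, 0 < e -> exists Y, S Y /\ forall i j, `|X i j - Y i j| < rC e) -> S X.
Definition oconvex (A : finType) (S : set (op A)) : Prop :=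
  forall X Y (l : R), S X -> S Y -> 0 <= l <= 1 -> S (opadd (opscale l X) (opscale (1 - l) Y)).

End LinAlg.
Arguments opI {R} A _ _.

(* The tensor structure.  dV t, dW t are the dimensions of V_t, W_t.         *)
(*   Jt t = index type of  W_t (x) V_t (x) ... (x) W_1 (x) V_1   (Jt 0 = C)  *)
(*   Kt t = index type of  V_{t+1} (x) W_t (x) V_t (x) ... (x) W_1 (x) V_1   *)
(* so Jt T is the index type of tilde V, Jt t.+1 = W_{t+1} * Kt t, and       *)
(* Kt t = V_{t+1} * Jt t.  (Kt t is the space of tau_{t+1}.)                *)
Fixpoint Jt (dV dW : nat -> nat) (t : nat) : finType :=
  match t with
  | 0 => unit
  | t'.+1 => ('I_(dW t'.+1) * ('I_(dV t'.+1) * Jt dV dW t'))%type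
  end.
Definition Kt (dV dW : nat -> nat) (t : nat) : finType := ('I_(dV t.+1) * Jt dV dW t)%type.

Section Tensor.
Variable R : realType.
Variables dV dW : nat -> nat.
Local Notation J := (Jt dV dW).
Local Notation K := (Kt dV dW).

Definition castJ (m n : nat) (e : m = n) (X : op R (J m)) : op R (J n) :=
  ecast k (op R (J k)) e X.

(* trace out W_{t+n}, V_{t+n}, ..., W_{t+1}, V_{t+1} *)
Fixpoint down (n t : nat) : op R (J (n + t)) -> op R (J t) :=
  match n return op R (J (n + t)) -> op R (J t) with
  | 0 => fun X => X
  | n'.+1 => fun X => @down n' t (trL (trL (X : op R (J (n' + t).+1))))
  end.

(* Tr_{W_T V_T ... V_{t+2} W_{t+1}} X, an operator on V_{t+1} (x) W_t (x) ... (x) V_1 *)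
Definition outer_tr (T t : nat) (lt : (t < T)%N) (X : op R (J T)) : op R (K t) :=
  trL (@down (T - t.+1)%N t.+1 (castJ (esym (subnK lt)) X)).

(* The set S_G of (rescaled) deterministic strategies/combs: I_{W_T} (x) tau_T.
   tau t here stands for tau_{t+1}, an operator on Kt t. *)
Definition SG (T : nat) : op R (J T) -> Prop :=
  match T return op R (J T) -> Prop with
  | 0 => fun _ => False
  | T'.+1 => fun X => exists tau : forall t : nat, op R (K t),
      (forall t, (t < T'.+1)%N -> psd (tau t)) /\
      tr (tau 0) = 1 /\
      (forall t, (t.+1 < T'.+1)%N -> trL (tau t.+1) = tens (opI _) (tau t)) /\
      X = tens (opI _) (tau T')
  end.

Definition NVprod (T : nat) : nat := (\prod_(t < T) dV t.+1)%N.

End Tensor.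

Definition left_action (gT : finGroupType) (X : Type) (act : gT -> X -> X) : Prop :=
  (forall x, act 1%g x = x) /\ (forall g h x, act (g * h)%g x = act g (act h x)).

Section Sym.
Variable R : realType.
Variable gT : finGroupType.
Variable A : finType.

(* an action of gT on Her_A by linear maps preserving <X,Y> = Tr(XY);
   hact is only constrained on Hermitian arguments *)
Definition her_action (hact : gT -> op R A -> op R A) : Prop :=
  (forall g X, herm X -> herm (hact g X)) /\
  (forall X, herm X -> hact 1%g X = X) /\
  (forall g h X, herm X -> hact (g * h)%g X = hact g (hact h X)) /\
  (forall g (r s : R) X Y, herm X -> herm Y ->
      hact g (opadd (opscale r X) (opscale s Y)) =
      opadd (opscale r (hact g X)) (opscale s (hact g Y))) /\
  (forall g X Y, herm X -> herm Y -> hs (hact g X) (hact g Y) = hs X Y).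

Variables (M Jn : nat).
Definition tact (hact : gT -> op R A -> op R A) (actM : gT -> 'I_M -> 'I_M)
    (g : gT) (Phi : tup R M A) : tup R M A :=
  fun m => hact g^-1%g (Phi (actM g m)).

(* <Phi, a_j> - b_j  and the objective  P(Phi) (real parts of real numbers) *)
Definition eta_j (a : 'I_Jn -> 'I_M -> op R A) (b : 'I_Jn -> R) (j : 'I_Jn)
    (Phi : tup R M A) : R :=
  complex.Re (\sum_(m < M) hs (Phi m) (a j m)) - b j.
Definition Pobj (c : 'I_M -> op R A) (Phi : tup R M A) : R :=
  complex.Re (\sum_(m < M) hs (Phi m) (c m)).

Definition G_symmetric (Tset Cset : set (tup R M A)) (Sset : set (op R A))
    (a : 'I_Jn -> 'I_M -> op R A) (b : 'I_Jn -> R) (c : 'I_M -> op R A)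
    (actM : gT -> 'I_M -> 'I_M) (actJ : gT -> 'I_Jn -> 'I_Jn)
    (hact : gT -> op R A -> op R A) : Prop :=
  left_action actM /\ left_action actJ /\ her_action hact /\
  (forall g Phi, Tset Phi -> Tset (tact hact actM g Phi)) /\
  (forall g Phi, Cset Phi -> Cset (tact hact actM g Phi)) /\
  (forall g phi, Sset phi -> Sset (hact g phi)) /\
  (forall g j m, hact g (a j m) = a (actJ g j) (actM g m)) /\
  (forall g j, b j = b (actJ g j)) /\
  (forall g m, hact g (c m) = c (actM g m)).
End Sym.

From Pilot Require Import Defs.
From mathcomp Require Import all_boot all_order all_algebra all_fingroup.
From mathcomp Require Import complex.
From mathcomp Require Import boolp classical_sets reals constructive_ereal ereal.
From mathcomp Require Import ring.
Set Implicit Arguments. Unset Strict Implicit. Unset Printing Implicit Defensive.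
Import Order.TTheory GRing.Theory Num.Theory.
Local Open Scope ring_scope.
Local Open Scope classical_set_scope.

(* Let Phi be feasible for (P).  Its group average
   Phi_bar = 1/|G| sum_g Phi^(g) is again in T (convexity), satisfies the
   constraints (they are linear and permuted by G) and has the same objective
   value (the objective is G-invariant).  Moreover X = sum_m Phi_bar_m is a
   G-invariant element of S_G = {I_{W_T} (x) tau_T}.  For each t the partial
   trace of X down to V_t (x) ... (x) V_1 is a nonzero multiple of tau_t and,
   by the covariance hypothesis, is fixed by Ad_{U'_{h,t}} (x) id; Schur's
   lemma for the irreducible U'_t forces tau_t = I_{V_t} (x) Z_t, and the
   normalization chain of S_G then forces X = I / prod_t N_{V_t}.  This gives
   "<=".  Conversely every point of the restricted problem lies in the closure
   of the feasible set (I / prod_t N_{V_t} is in S_G), and the objective is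
   continuous, which gives ">=". *)

Section OpAlgebra.
Variable R : realType.
Local Notation C := R[i].
Implicit Types (A B : finType).

Definition cs A (z : C) (X : op R A) : op R A := fun i j => z * X i j.

Lemma conjcM (x y : C) : conjc (x * y) = conjc x * conjc y.
Proof. exact: rmorphM. Qed.

Lemma conjcD (x y : C) : conjc (x + y) = conjc x + conjc y.
Proof. exact: rmorphD. Qed.

Lemma conjc_sum (I : Type) (s : seq I) (F : I -> C) :
  conjc (\sum_(i <- s) F i) = \sum_(i <- s) conjc (F i).
Proof. exact: rmorph_sum. Qed.

Lemma op_ext A (X Y : op R A) : (forall i j, X i j = Y i j) -> X = Y.
Proof. by move=> eXY; apply: funext => i; apply: funext => j; exact: eXY. Qed.

Lemma opmulA A (X Y Z : op R A) : opmul X (opmul Y Z) = opmul (opmul X Y) Z.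
Proof.
apply: op_ext => i j; rewrite /opmul.
under eq_bigr do rewrite big_distrr /=.
under [RHS]eq_bigr do rewrite big_distrl /=.
by rewrite exchange_big; apply: eq_bigr => k _; apply: eq_bigr => l _; rewrite mulrA.
Qed.

Lemma opmulDl A (X Y Z : op R A) : opmul (opadd X Y) Z = opadd (opmul X Z) (opmul Y Z).
Proof.
apply: op_ext => i j; rewrite /opmul /opadd -big_split.
by apply: eq_bigr => k _; rewrite mulrDl.
Qed.

Lemma opmulDr A (X Y Z : op R A) : opmul Z (opadd X Y) = opadd (opmul Z X) (opmul Z Y).
Proof.
apply: op_ext => i j; rewrite /opmul /opadd -big_split.
by apply: eq_bigr => k _; rewrite mulrDr.
Qed.

Lemma opmul_csl A z (X Z : op R A) : opmul (cs z X) Z = cs z (opmul X Z).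
Proof.
apply: op_ext => i j; rewrite /opmul /cs big_distrr.
by apply: eq_bigr => k _ /=; rewrite mulrA.
Qed.

Lemma opmul_csr A z (X Z : op R A) : opmul Z (cs z X) = cs z (opmul Z X).
Proof.
apply: op_ext => i j; rewrite /opmul /cs big_distrr.
by apply: eq_bigr => k _ /=; rewrite mulrCA.
Qed.

Lemma adj_opmul A (X Y : op R A) : adj (opmul X Y) = opmul (adj Y) (adj X).
Proof.
apply: op_ext => i j; rewrite /opmul /adj conjc_sum.
by apply: eq_bigr => k _; rewrite conjcM mulrC.
Qed.

Lemma adjK A (X : op R A) : adj (adj X) = X.
Proof. by apply: op_ext => i j; rewrite /adj conjcK. Qed.

Lemma cs_cs A (z w : C) (X : op R A) : cs z (cs w X) = cs (z * w) X.
Proof. by apply: op_ext => i j; rewrite /cs mulrA. Qed.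

Lemma cs_inj A (z : C) (X Y : op R A) : z != 0 -> cs z X = cs z Y -> X = Y.
Proof.
move=> z0 /(congr1 (cs z^-1)); rewrite !cs_cs mulVf // => eXY.
by apply: op_ext => i j; have := congr1 (fun W => W i j) eXY; rewrite /cs !mul1r.
Qed.

Lemma tens_II A B : tens (opI A) (opI B) = opI (R:=R) (A * B)%type.
Proof.
apply: op_ext => -[a b] [a' b']; rewrite /tens /opI /= xpair_eqE.
by case: (a == a'); case: (b == b'); rewrite /= ?mulr1 ?mulr0 ?mul0r.
Qed.

Lemma tens_cs A B (X : op R A) z (Y : op R B) : tens X (cs z Y) = cs z (tens X Y).
Proof. by apply: op_ext => p q; rewrite /tens /cs mulrCA. Qed.

Lemma trL_cs A B z (Y : op R (A * B)%type) : trL (cs z Y) = cs z (trL Y).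
Proof. by apply: op_ext => p q; rewrite /trL /cs big_distrr. Qed.

Lemma trL_tensI A B (Y : op R B) : trL (tens (opI A) Y) = cs (#|A|%:R) Y.
Proof.
apply: op_ext => p q; rewrite /trL /tens /opI /cs /=.
under eq_bigr do rewrite eqxx mul1r.
by rewrite sumr_const mulr_natl.
Qed.

Lemma Ad_id_cs A B (U : uop R A) z (Y : op R (A * B)%type) :
  Ad_id U (cs z Y) = cs z (Ad_id U Y).
Proof.
rewrite /Ad_id; have -> : (if U.2 then ptransL (cs z Y) else cs z Y) =
   cs z (if U.2 then ptransL Y else Y) by case: U.2.
by rewrite opmul_csr opmul_csl.
Qed.

Lemma herm_sum A (I : Type) (s : seq I) (Z : I -> op R A) :
  (forall k, herm (Z k)) -> herm (fun i j => \sum_(k <- s) Z k i j).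
Proof. by move=> hZ i j; rewrite conjc_sum; apply: eq_bigr => k _; exact: hZ. Qed.

Lemma rCM (x y : R) : rC (x * y) = rC x * rC y.
Proof. exact: (rmorphM (real_complex R)). Qed.

Lemma rC_invn (n : nat) : rC (n%:R^-1 : R) = (n%:R : C)^-1.
Proof. by change (real_complex R n%:R^-1 = (n%:R : C)^-1); rewrite fmorphV rmorph_nat. Qed.

Lemma ReD (x y : C) : complex.Re (x + y) = complex.Re x + complex.Re y.
Proof. by case: x => ? ?; case: y. Qed.

Lemma Re_sum (I : Type) (s : seq I) (F : I -> C) :
  complex.Re (\sum_(i <- s) F i) = \sum_(i <- s) complex.Re (F i).
Proof. by elim: s => [|x s IH]; rewrite ?big_nil // !big_cons ReD IH. Qed.

Lemma Re_rCM (r : R) (z : C) : complex.Re (rC r * z) = r * complex.Re z.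
Proof. by case: z => x y /=; rewrite mul0r subr0. Qed.

End OpAlgebra.

Section Schur.
Variable R : realType.
Local Notation C := R[i].
Implicit Types (A : finType).

Lemma apply_mul A (X Y : op R A) v : apply (opmul X Y) v = apply X (apply Y v).
Proof.
apply: funext => i; rewrite /apply /opmul.
under eq_bigr do rewrite big_distrl /=.
rewrite exchange_big; apply: eq_bigr => k _; rewrite big_distrr.
by apply: eq_bigr => j _ /=; rewrite mulrA.
Qed.

Lemma apply_opI A (v : vec R A) : apply (opI A) v = v.
Proof.
apply: funext => i; rewrite /apply /opI (bigD1 i) //= eqxx mul1r big1 ?addr0 //.
by move=> j; rewrite eq_sym => /negbTE ->; rewrite mul0r.
Qed.

Lemma apply_scale A (X : op R A) (z : C) v :
  apply X (fun i => z * v i) = (fun i => z * apply X v i).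
Proof.
apply: funext => i; rewrite /apply big_distrr; apply: eq_bigr => j _.
by rewrite mulrCA.
Qed.

Lemma apply_conj A (X : op R A) v :
  apply (opconj X) (fun i => conjc (v i)) = (fun i => conjc (apply X v i)).
Proof.
apply: funext => i; rewrite /apply conjc_sum; apply: eq_bigr => j _.
by rewrite conjcM.
Qed.

Definition eigvec A (X : op R A) (l : C) (u : vec R A) : Prop :=
  forall i, apply X u i = l * u i.

Lemma eigvec_subspace A (X : op R A) l : Defs.subspace (eigvec X l).
Proof.
rewrite /Defs.subspace; split; [|split].
- by move=> i; rewrite /apply big1 ?mulr0 // => j _; rewrite mulr0.
- move=> u w Pu Pw i; rewrite /apply.
  under eq_bigr do rewrite mulrDr.
  by rewrite big_split /= -/(apply X u i) -/(apply X w i) Pu Pw mulrDr.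
- by move=> z w Pw i; rewrite apply_scale Pw mulrCA.
Qed.

Lemma exists_eigvec n (X : op R 'I_n) :
  (0 < n)%N -> exists l v k, eigvec X l v /\ v k != 0.
Proof.
move=> n0; pose Xm := \matrix_(i, j) X j i : 'M[C]_n.
have [l] : exists l, root (char_poly Xm) l.
  by apply/closed_rootP; rewrite size_char_poly eqSS -lt0n.
rewrite -eigenvalue_root_char => /eigenvalueP [v vX vnz].
have [k hk] : exists k, v ord0 k != 0.
  apply/existsP; apply: contraR vnz => /existsPn v0; apply/eqP/rowP => i.
  by rewrite !mxE; apply/eqP; exact: (negbNE (v0 _)).
exists l, (fun i => v ord0 i), k; split=> // i.
have := congr1 (fun N : 'M[C]_(1, n) => N ord0 i) vX; rewrite !mxE => <-.
by apply: eq_bigr => j _; rewrite mxE mulrC.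
Qed.

Lemma herm_eigen_real A (X : op R A) l v k :
  herm X -> eigvec X l v -> v k != 0 -> conjc l = l.
Proof.
move=> hX eig vk.
pose s := \sum_i conjc (v i) * v i.
have s0 : s != 0.
  have ge0 i : 0 <= conjc (v i) * v i by rewrite mulrC mulcJ_ge0.
  apply/negP => /eqP /psumr_eq0P v0.
  by move/eqP: (v0 (fun i _ => ge0 i) k isT); rewrite mulf_eq0 conjc_eq0 orbb; apply/negP.
have s_real : conjc s = s.
  by rewrite /s conjc_sum; apply: eq_bigr => i _; rewrite conjcM conjcK mulrC.
have ls_real : conjc (l * s) = l * s.
  have -> : l * s = \sum_i conjc (v i) * apply X v i.
    by rewrite /s big_distrr; apply: eq_bigr => i _; rewrite eig mulrCA.
  rewrite conjc_sum /apply; under eq_bigr do rewrite conjcM conjcK conjc_sum big_distrr.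
  rewrite exchange_big; apply: eq_bigr => i _; rewrite big_distrr; apply: eq_bigr => j _ /=.
  by rewrite conjcM -hX; ring.
move: ls_real; rewrite conjcM s_real => /eqP; rewrite -subr_eq0 -mulrBl mulf_eq0.
by rewrite (negbTE s0) orbF subr_eq0 => /eqP.
Qed.

Lemma eigvec_invariant A (U : uop R A) (X : op R A) l u :
  is_uop U -> Ad U X = X -> conjc l = l -> eigvec X l u -> eigvec X l (uapply U u).
Proof.
case: U => W anti [_ WW] /=; rewrite /Ad /uapply /= => hXW l_real eig.
set X' := if anti then opconj X else X.
have XW u' : apply X (apply W u') = apply W (apply X' u').
  by rewrite -{1}hXW !apply_mul -(apply_mul (adj W) W u') WW apply_opI.
have eig' : apply X' (if anti then (fun i => conjc (u i)) else u) =
            (fun i => l * (if anti then (fun i => conjc (u i)) else u) i).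
  rewrite /X'; case: anti {X' XW hXW WW} => /=; apply: funext => j.
    by rewrite apply_conj eig conjcM l_real.
  exact: eig.
by move=> i; rewrite XW eig' apply_scale.
Qed.

Lemma schur_herm n (gT : finGroupType) (H : {group gT}) (U : gT -> uop R 'I_n)
    (X : op R 'I_n) :
  (0 < n)%N -> (forall h, h \in H -> is_uop (U h)) -> irreducible_rep H U -> herm X ->
  (forall h, h \in H -> Ad (U h) X = X) ->
  exists l : C, forall i j, X i j = l * (i == j)%:R.
Proof.
move=> n0 huop hirr hX hinv.
have [l [v [k [eig vk]]]] := exists_eigvec X n0.
have l_real := herm_eigen_real hX eig vk.
have inv h : h \in H -> forall u, eigvec X l u -> eigvec X l (uapply (U h) u).
  by move=> hH u; apply: eigvec_invariant; [exact: huop | exact: hinv | exact: l_real].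
case: (hirr _ (eigvec_subspace X l) inv) => [zero | full].
  by move: vk; rewrite (zero v eig) eqxx.
exists l => i j.
have := full (fun k => (k == j)%:R) i; rewrite /apply (bigD1 j) //= eqxx mulr1.
by rewrite big1 ?addr0 // => k0 /negbTE ->; rewrite mulr0.
Qed.

End Schur.

Section TensorSchur.
Variable R : realType.
Local Notation C := R[i].
Implicit Types (A B : finType).

Definition trn A (X : op R A) : op R A := fun i j => X j i.

(* The complex-linear extension of Ad_U from Hermitian to all operators:
   for anti-unitary U it conjugates the transpose instead of the conjugate. *)
Definition Adl A (U : uop R A) (X : op R A) : op R A :=
  opmul (opmul U.1 (if U.2 then trn X else X)) (adj U.1).

Lemma Adl_add A U (X Y : op R A) : Adl U (opadd X Y) = opadd (Adl U X) (Adl U Y).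
Proof.
rewrite /Adl; have -> : (if U.2 then trn (opadd X Y) else opadd X Y) =
  opadd (if U.2 then trn X else X) (if U.2 then trn Y else Y) by case: U.2.
by rewrite opmulDr opmulDl.
Qed.

Lemma Adl_cs A U z (X : op R A) : Adl U (cs z X) = cs z (Adl U X).
Proof.
rewrite /Adl; have -> : (if U.2 then trn (cs z X) else cs z X) =
  cs z (if U.2 then trn X else X) by case: U.2.
by rewrite opmul_csr opmul_csl.
Qed.

Lemma Adl_adj A U (X : op R A) : Adl U (adj X) = adj (Adl U X).
Proof.
by rewrite /Adl !adj_opmul adjK opmulA; congr (opmul (opmul _ _) _); case: U.2.
Qed.

Lemma Adl_herm A U (X : op R A) : herm X -> Adl U X = Ad U X.
Proof.
move=> hX; rewrite /Adl /Ad; case: U.2 => //; congr (opmul (opmul _ _) _).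
by apply: op_ext => i j; rewrite /trn /opconj hX.
Qed.

(* Schur's lemma for arbitrary (not necessarily Hermitian) fixed operators,
   via the decomposition X = (X + X^dagger)/2 - i (i (X - X^dagger))/2. *)
Lemma schur_lin n (gT : finGroupType) (H : {group gT}) (U : gT -> uop R 'I_n)
    (X : op R 'I_n) :
  (0 < n)%N -> (forall h, h \in H -> is_uop (U h)) -> irreducible_rep H U ->
  (forall h, h \in H -> Adl (U h) X = X) ->
  exists mu : C, forall i j, X i j = mu * (i == j)%:R.
Proof.
move=> n0 huop hirr hX.
pose X1 := opadd X (adj X).
pose X2 := cs 'i%C (opadd X (cs (-1) (adj X))).
have hX1 : herm X1 by move=> i j; rewrite /X1 /opadd /adj conjcD conjcK addrC.
have conj_i : conjc ('i%C : C) = - 'i%C by apply/eqP; rewrite eq_complex /= oppr0 !eqxx.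
have hX2 : herm X2.
  move=> i j; rewrite /X2 /cs /opadd /adj conjcM conjcD conjcM conjcK conj_i.
  by rewrite rmorphN rmorph1; ring.
have iX1 h : h \in H -> Ad (U h) X1 = X1.
  by move=> hH; rewrite -Adl_herm // /X1 Adl_add Adl_adj hX.
have iX2 h : h \in H -> Ad (U h) X2 = X2.
  by move=> hH; rewrite -Adl_herm // /X2 Adl_cs Adl_add Adl_cs Adl_adj hX.
have [l1 e1] := schur_herm n0 huop hirr hX1 iX1.
have [l2 e2] := schur_herm n0 huop hirr hX2 iX2.
exists (2%:R^-1 * (l1 - 'i%C * l2)) => i j.
have two_X : (2%:R : C) * X i j = (l1 - 'i%C * l2) * (i == j)%:R.
  have i2 : ('i%C : C) * 'i%C = -1 by rewrite -expr2 sqr_i.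
  have -> : (2%:R : C) * X i j = X1 i j - 'i%C * X2 i j.
    by rewrite /X1 /X2 /opadd /cs mulrA i2; ring.
  by rewrite e1 e2; ring.
have n2 : (2%:R : C) != 0 by rewrite pnatr_eq0.
by rewrite -[LHS](mulKf n2) two_X; ring.
Qed.

Definition blk n B (Y : op R ('I_n * B)%type) (b b' : B) : op R 'I_n :=
  fun u u' => Y (u, b) (u', b').

Lemma sum_pair A B (F : (A * B)%type -> C) :
  \sum_(p : (A * B)%type) F p = \sum_a \sum_b F (a, b).
Proof. by rewrite pair_big; apply: eq_bigr => -[a b]. Qed.

Lemma mul_tensI_l n B (W : op R 'I_n) (Y : op R ('I_n * B)%type) v b q :
  opmul (tens W (opI B)) Y (v, b) q = \sum_u W v u * Y (u, b) q.
Proof.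
rewrite /opmul sum_pair; apply: eq_bigr => u _.
rewrite (bigD1 b) //= big1 ?addr0; first by rewrite /tens /opI /= eqxx mulr1.
by move=> b0 hb; rewrite /tens /opI /= eq_sym (negbTE hb) mulr0 mul0r.
Qed.

Lemma mul_adj_tensI_r n B (W : op R 'I_n) (Y : op R ('I_n * B)%type) p v b :
  opmul Y (adj (tens W (opI B))) p (v, b) = \sum_u Y p (u, b) * conjc (W v u).
Proof.
rewrite /opmul sum_pair; apply: eq_bigr => u _.
rewrite (bigD1 b) //= big1 ?addr0; first by rewrite /adj /tens /opI /= eqxx mulr1.
by move=> b0 hb; rewrite /adj /tens /opI /= eq_sym (negbTE hb) mulr0 conjc0 mulr0.
Qed.

Lemma Ad_id_blk n B (U : uop R 'I_n) (Y : op R ('I_n * B)%type) b b' v v' :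
  Ad_id U Y (v, b) (v', b') = Adl U (blk Y b b') v v'.
Proof.
rewrite /Ad_id mul_adj_tensI_r /Adl {2}/opmul /adj.
apply: eq_bigr => u' _; congr (_ * _); rewrite mul_tensI_l /opmul.
by apply: eq_bigr => u _; congr (_ * _); case: U.2.
Qed.

Lemma schur_tens n B (gT : finGroupType) (H : {group gT}) (U : gT -> uop R 'I_n)
    (Y : op R ('I_n * B)%type) :
  (0 < n)%N -> (forall h, h \in H -> is_uop (U h)) -> irreducible_rep H U ->
  (forall h, h \in H -> Ad_id (U h) Y = Y) ->
  exists Z : op R B, Y = tens (opI 'I_n) Z.
Proof.
move=> n0 huop hirr hY.
have scalar_blk b b' : exists mu : C, forall v v', Y (v, b) (v', b') = mu * (v == v')%:R.
  apply: (schur_lin n0 huop hirr) => h hH.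
  by apply: op_ext => v v'; rewrite -Ad_id_blk hY.
have [mu hmu] := choice (fun bb' : B * B => scalar_blk bb'.1 bb'.2).
exists (fun b b' => mu (b, b')).
by apply: op_ext => -[v b] [v' b']; rewrite /tens /opI /= (hmu (b, b')) mulrC.
Qed.

End TensorSchur.

Section Combs.
Variable R : realType.
Local Notation C := R[i].
Variables dV dW : nat -> nat.
Local Notation J := (Jt dV dW).
Local Notation K := (Kt dV dW).

(* The operator I_{W_k} (x) tau_k on W_k (x) V_k (x) ... (x) V_1 built from a
   family tau, where tau t lives on V_{t+1} (x) W_t (x) ... (x) V_1. *)
Definition comb (tau : forall t, op R (K t)) (k : nat) : op R (J k) :=
  match k return op R (J k) with
  | 0 => fun _ _ => 0
  | k'.+1 => tens (opI _) (tau k')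
  end.
Arguments comb : clear implicits.

Lemma cast_comb tau m n (e : m = n) : castJ e (comb tau m) = comb tau n.
Proof. by case: n / e. Qed.

Lemma down_cs n t z (Y : op R (J (n + t))) :
  @Defs.down R dV dW n t (cs z Y) = cs z (@Defs.down R dV dW n t Y).
Proof. by elim: n t z Y => [|n IH] t z Y //=; rewrite !trL_cs IH. Qed.

Lemma down_comb T (tau : forall t, op R (K t))
    (tau_chain : forall t, (t.+1 < T)%N -> trL (tau t.+1) = tens (opI _) (tau t))
    (hdW : forall t, (0 < t <= T)%N -> (0 < dW t)%N) n t :
  (0 < t)%N -> (n + t <= T)%N ->
  exists z : C, z != 0 /\ @Defs.down R dV dW n t (comb tau (n + t)) = cs z (comb tau t).
Proof.
elim: n t => [|n IH] t t0 hnt.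
  by exists 1; split; [exact: oner_neq0 | apply: op_ext => i j; rewrite /cs mul1r].
have step : trL (trL (comb tau (n + t).+1)) = cs ((dW (n + t).+1)%:R) (comb tau (n + t)).
  rewrite /= trL_tensI card_ord trL_cs.
  case E : (n + t)%N => [|s]; first by have := ltn_addl n t0; rewrite E.
  by rewrite /= tau_chain // -E -addSn.
have [z [z0 hz]] := IH t t0 (ltnW hnt).
exists ((dW (n + t).+1)%:R * z); split.
  by rewrite mulf_neq0 // pnatr_eq0 -lt0n; apply: hdW; rewrite /= -addSn hnt.
change (@Defs.down R dV dW n t (trL (trL (comb tau (n + t).+1))) =
        cs ((dW (n + t).+1)%:R * z) (comb tau t)).
by rewrite step down_cs hz cs_cs mulrC.
Qed.

Lemma outer_tr_comb T (tau : forall t, op R (K t))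
    (tau_chain : forall t, (t.+1 < T)%N -> trL (tau t.+1) = tens (opI _) (tau t))
    (hdW : forall t, (0 < t <= T)%N -> (0 < dW t)%N) t (lt : (t < T)%N) :
  exists z : C, z != 0 /\ outer_tr lt (comb tau T) = cs z (tau t).
Proof.
rewrite /outer_tr cast_comb.
have hle : (T - t.+1 + t.+1 <= T)%N by rewrite subnK.
have [z [z0 ->]] := down_comb tau_chain hdW (ltn0Sn t) hle.
rewrite trL_cs /= trL_tensI card_ord cs_cs.
exists (z * (dW t.+1)%:R); split => //.
by rewrite mulf_neq0 // pnatr_eq0 -lt0n; apply: hdW.
Qed.

(* The weight 1 / (N_{V_1} ... N_{V_{t+1}}) of the maximally mixed tau_{t+1}. *)
Definition mixed_weight (t : nat) : C := ((\prod_(s < t.+1) dV s.+1)%N%:R)^-1.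

Lemma factorized_chain_mixed T (tau : forall t, op R (K t))
    (hdV : forall t, (0 < t <= T)%N -> (0 < dV t)%N)
    (tau_tr : tr (tau 0) = 1)
    (tau_chain : forall t, (t.+1 < T)%N -> trL (tau t.+1) = tens (opI _) (tau t))
    (tau_fact : forall t, (t < T)%N -> exists Z, tau t = tens (opI _) Z) :
  forall t, (t < T)%N -> tau t = cs (mixed_weight t) (opI _).
Proof.
elim=> [|t IH] lt.
  have [Z eZ] := tau_fact 0%N lt.
  set z := Z tt tt.
  have Z_scalar : Z = cs z (opI _) by apply: op_ext => -[] []; rewrite /cs /opI mulr1.
  have d0 : ((dV 1)%:R : C) != 0 by rewrite pnatr_eq0 -lt0n; apply: hdV; rewrite /= lt.
  have hz : z * (dV 1)%:R = 1.
    move: tau_tr; rewrite eZ Z_scalar tens_cs tens_II /tr /cs -big_distrr /= /opI.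
    under eq_bigr do rewrite eqxx.
    by rewrite sumr_const card_prod card_ord card_unit muln1.
  rewrite eZ Z_scalar tens_cs tens_II /mixed_weight big_ord1; congr cs.
  by apply: (mulIf d0); rewrite hz mulVf.
have [Z eZ] := tau_fact t.+1 lt.
have e := tau_chain t lt.
rewrite eZ trL_tensI card_ord (IH (ltnW lt)) tens_cs tens_II in e.
have d0 : ((dV t.+2)%:R : C) != 0 by rewrite pnatr_eq0 -lt0n; apply: hdV; rewrite /= lt.
have Z_scalar : Z = cs ((dV t.+2)%:R^-1 * mixed_weight t) (opI _).
  by apply: (cs_inj d0); rewrite e cs_cs mulrA mulfV // mul1r.
rewrite eZ Z_scalar tens_cs tens_II; congr cs.
by rewrite /mixed_weight [in RHS]big_ord_recr /= natrM invfM mulrC.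
Qed.

Lemma SG_invariant_mixed T (hdV : forall t, (0 < t <= T)%N -> (0 < dV t)%N)
    (hdW : forall t, (0 < t <= T)%N -> (0 < dW t)%N)
    (gT : finGroupType) (H : nat -> {group gT}) (U : forall t : nat, gT -> uop R 'I_(dV t.+1))
    (huop : forall (t : 'I_T) h, h \in H t -> is_uop (U t h))
    (hirr : forall t : 'I_T, irreducible_rep (H t) (U t)) (X : op R (J T)) :
  SG X ->
  (forall (t : 'I_T) h, h \in H t ->
     Ad_id (U t h) (outer_tr (ltn_ord t) X) = outer_tr (ltn_ord t) X) ->
  X = opscale (NVprod dV T)%:R^-1 (opI _).
Proof.
case: T hdV hdW huop hirr X => [|T'] hdV hdW huop hirr X //=.
move=> [tau [_ [tau_tr [tau_chain ->]]]] hinv.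
have tau_fact t : (t < T'.+1)%N -> exists Z, tau t = tens (opI _) Z.
  move=> lt; have [z [z0 hz]] := outer_tr_comb tau_chain hdW (ltn_ord (Ordinal lt)).
  apply: (schur_tens (hdV t.+1 lt) (huop (Ordinal lt)) (hirr (Ordinal lt))) => h hH.
  by apply: (cs_inj z0); rewrite -Ad_id_cs -hz; exact: hinv (Ordinal lt) h hH.
rewrite (factorized_chain_mixed hdV tau_tr tau_chain tau_fact (ltnSn T')).
by rewrite tens_cs tens_II /opscale rC_invn.
Qed.

Lemma psd_csI (A : finType) (k : R) : 0 <= k -> psd (cs (rC k) (opI (R:=R) A)).
Proof.
move=> k0; split.
  move=> i j; rewrite /cs /opI conjcM conjc_nat eq_sym.
  by have -> : conjc (rC k) = rC k by apply/eqP; rewrite eq_complex /= oppr0 !eqxx.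
move=> v.
have -> : \sum_i \sum_j conjc (v i) * cs (rC k) (opI A) i j * v j =
          \sum_i rC k * (v i * conjc (v i)).
  apply: eq_bigr => i _; rewrite (bigD1 i) //= big1 ?addr0.
    by rewrite /cs /opI eqxx mulr1; ring.
  by move=> j hj; rewrite /cs /opI eq_sym (negbTE hj) mulr0 mulr0 mul0r.
apply: sumr_ge0 => i _; apply: mulr_ge0; last exact: mulcJ_ge0.
by rewrite lecE /= eqxx k0.
Qed.

Lemma SG_mixed T (hdV : forall t, (0 < t <= T)%N -> (0 < dV t)%N) : (0 < T)%N ->
  SG (opscale ((NVprod dV T)%:R^-1) (opI (R:=R) (J T))).
Proof.
case: T hdV => [//|T'] hdV _ /=.
pose w t := (((\prod_(s < t.+1) dV s.+1)%N)%:R^-1 : R).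
exists (fun t => cs (rC (w t)) (opI (K t))); split; [|split; [|split]].
- by move=> t _; apply: psd_csI; rewrite /w invr_ge0 ler0n.
- rewrite /tr /cs /opI; under eq_bigr do rewrite eqxx mulr1.
  rewrite sumr_const card_prod card_ord card_unit muln1 /w big_ord1 rC_invn /=.
  rewrite -[X in X = 1]mulr_natr mulVf // pnatr_eq0 -lt0n.
  exact: (hdV 1%N).
- move=> t lt.
  rewrite -tens_II tens_cs trL_cs trL_tensI card_ord cs_cs tens_II; congr cs.
  rewrite /w !rC_invn [in X in X * _]big_ord_recr /= natrM invfM -mulrA mulVf ?mulr1 //.
  by rewrite pnatr_eq0 -lt0n; apply: hdV; rewrite /= lt.
- by rewrite tens_cs tens_II.
Qed.

End Combs.

Section Averaging.
Variable R : realType.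
Local Notation C := R[i].
Variables (A : finType) (M : nat).

Definition avgs (I : Type) (s : seq I) (F : I -> tup R M A) : tup R M A :=
  fun m i j => rC ((size s)%:R^-1) * \sum_(g <- s) F g m i j.

Lemma conv_avg (I : Type) (S : set (tup R M A)) (s : seq I) (F : I -> tup R M A) :
  tconvex S -> (0 < size s)%N -> (forall g, S (F g)) -> S (avgs s F).
Proof.
move=> hconv; elim: s => [//|g s IH] _ hF.
case: s IH => [|g' s] IH.
  suff -> : avgs [:: g] F = F g by [].
  apply: funext => m; apply: op_ext => i j.
  by rewrite /avgs /= big_cons big_nil addr0 invr1 mul1r.
set k := size (g' :: s).
have k0 : (k%:R : R) != 0 by rewrite pnatr_eq0.
have k10 : ((k.+1)%:R : R) != 0 by rewrite pnatr_eq0.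
have := hconv (F g) (avgs (g' :: s) F) ((k.+1)%:R^-1) (hF g) (IH isT hF).
have -> : (fun m => opadd (opscale (k.+1)%:R^-1 (F g m))
            (opscale (1 - (k.+1)%:R^-1) (avgs (g' :: s) F m))) = avgs [:: g, g' & s] F.
  apply: funext => m; apply: op_ext => i j.
  rewrite /avgs /opadd /opscale -/k [in RHS]big_cons.
  have -> : size [:: g, g' & s] = k.+1 by [].
  rewrite mulrA -rCM.
  have -> : (1 - (k.+1)%:R^-1) * k%:R^-1 = ((k.+1)%:R^-1 : R).
    by rewrite -[k.+1]addn1 natrD; field; rewrite k0 andbT natr1.
  by rewrite mulrDr.
by apply; rewrite invr_ge0 ler0n /= invf_le1 // ?ltr0n // ler1n.
Qed.

Lemma hs_scale (X Y : op R A) (z : C) : hs (fun i j => z * X i j) Y = z * hs X Y.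
Proof.
rewrite /hs /tr /opmul big_distrr; apply: eq_bigr => i _.
by rewrite big_distrr; apply: eq_bigr => k _ /=; rewrite mulrA.
Qed.

Lemma hs_add (X Z Y : op R A) : hs (fun i j => X i j + Z i j) Y = hs X Y + hs Z Y.
Proof.
rewrite /hs /tr /opmul -big_split; apply: eq_bigr => i _.
by rewrite -big_split; apply: eq_bigr => k _ /=; rewrite mulrDl.
Qed.

Lemma hs_sum (I : Type) (s : seq I) (X : I -> op R A) (Y : op R A) :
  hs (fun i j => \sum_(g <- s) X g i j) Y = \sum_(g <- s) hs (X g) Y.
Proof.
elim: s => [|g s IH].
  rewrite big_nil /hs /tr /opmul big1 // => i _.
  by rewrite big1 // => k _; rewrite big_nil mul0r.
rewrite big_cons -IH -hs_add; congr hs.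
by apply: op_ext => i j; rewrite big_cons.
Qed.

Lemma Pobj_avgs (I : Type) (d : 'I_M -> op R A) (s : seq I) (F : I -> tup R M A) :
  Pobj d (avgs s F) = (size s)%:R^-1 * \sum_(g <- s) Pobj d (F g).
Proof.
rewrite /Pobj /avgs -Re_sum -Re_rCM; congr complex.Re.
under eq_bigr do rewrite hs_scale hs_sum.
by rewrite -big_distrr /= exchange_big.
Qed.

End Averaging.

Section GroupAverage.
Variable R : realType.
Local Notation C := R[i].
Variables (gT : finGroupType) (A : finType) (M : nat).
Variable hact : gT -> op R A -> op R A.
Variable actM : gT -> 'I_M -> 'I_M.
Hypothesis hact_action : her_action hact.
Hypothesis actM_action : left_action actM.

Lemma hact_herm g X : herm X -> herm (hact g X).
Proof. exact: hact_action.1. Qed.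

Lemma hactM g h X : herm X -> hact (g * h)%g X = hact g (hact h X).
Proof. exact: hact_action.2.2.1. Qed.

Lemma hactK g X : herm X -> hact g (hact g^-1 X) = X.
Proof. by move=> hX; rewrite -hactM // mulgV hact_action.2.1. Qed.

Lemma actM_inj g : injective (actM g).
Proof.
move=> x y /(congr1 (actM g^-1)).
by rewrite -!actM_action.2 mulVg !actM_action.1.
Qed.

Lemma Pobj_tact (d d' : 'I_M -> op R A) g (Phi : tup R M A) :
  (forall m, herm (d m)) -> (forall m, herm (Phi m)) ->
  (forall m, hact g (d m) = d' (actM g m)) ->
  Pobj d (tact hact actM g Phi) = Pobj d' Phi.
Proof.
move=> hd hPhi hdd; rewrite /Pobj /tact; congr complex.Re.
transitivity (\sum_(m < M) hs (Phi (actM g m)) (d' (actM g m))).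
  apply: eq_bigr => m _.
  rewrite -(hact_action.2.2.2.2 g (hact g^-1 (Phi (actM g m))) (d m)); last exact: hd.
    by rewrite hactK // hdd.
  exact: hact_herm.
by rewrite [RHS](reindex_inj (@actM_inj g)).
Qed.

Lemma hact_scale g r X : herm X -> hact g (opscale r X) = opscale r (hact g X).
Proof.
have scale0 (Y : op R A) : opadd (opscale r Y) (opscale 0 Y) = opscale r Y.
  by apply: op_ext => i j; rewrite /opadd /opscale /rC mul0r addr0.
by move=> hX; have := hact_action.2.2.2.1 g r 0 X X hX hX; rewrite !scale0.
Qed.

Lemma hact_add g X Y : herm X -> herm Y -> hact g (opadd X Y) = opadd (hact g X) (hact g Y).
Proof.
have scale1 (Z : op R A) : opscale 1 Z = Z by apply: op_ext => i j; rewrite /opscale mul1r.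
by move=> hX hY; have := hact_action.2.2.2.1 g 1 1 X Y hX hY; rewrite !scale1.
Qed.

Lemma hact_sum g (I : Type) (s : seq I) (Z : I -> op R A) :
  (forall k, herm (Z k)) ->
  hact g (fun i j => \sum_(k <- s) Z k i j) = (fun i j => \sum_(k <- s) hact g (Z k) i j).
Proof.
move=> hZ; elim: s => [|k s IH].
  have zero : (fun _ _ => 0) = opscale 0 (fun _ _ : A => 0 : C).
    by apply: op_ext => i j; rewrite /opscale mulr0.
  have herm0 : herm (fun _ _ : A => 0 : C) by move=> i j; rewrite conjc0.
  under eq_fun do under eq_fun do rewrite big_nil.
  rewrite zero hact_scale //; apply: op_ext => i j.
  by rewrite big_nil /opscale /rC mul0r.
have -> : (fun i j => \sum_(l <- k :: s) Z l i j) =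
          opadd (Z k) (fun i j => \sum_(l <- s) Z l i j).
  by apply: op_ext => i j; rewrite big_cons.
rewrite hact_add // ?IH; last exact: herm_sum.
by apply: op_ext => i j; rewrite big_cons.
Qed.

Definition avgG (Phi : tup R M A) : tup R M A :=
  avgs (enum gT) (fun g => tact hact actM g Phi).

Lemma tsum_avgG (Phi : tup R M A) :
  tsum (avgG Phi) = opscale (#|gT|%:R^-1)
     (fun i j => \sum_(g : gT) \sum_(m < M) hact g^-1 (Phi (actM g m)) i j).
Proof.
apply: op_ext => i j.
by rewrite /tsum /avgG /avgs /opscale -cardE -big_distrr /= exchange_big /= big_enum.
Qed.

Lemma avgG_invariant (Phi : tup R M A) h : (forall m, herm (Phi m)) ->
  hact h (tsum (avgG Phi)) = tsum (avgG Phi).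
Proof.
move=> hPhi; rewrite tsum_avgG hact_scale; last first.
  by apply: herm_sum => g; apply: herm_sum => m; exact: hact_herm.
congr opscale.
rewrite hact_sum; last by move=> g; apply: herm_sum => m; exact: hact_herm.
apply: op_ext => i j.
transitivity (\sum_(g : gT) \sum_(m < M) hact (h * g^-1)%g (Phi (actM g m)) i j).
  apply: eq_bigr => g _; rewrite hact_sum; last by move=> m; exact: hact_herm.
  by apply: eq_bigr => m _; rewrite hactM.
rewrite (reindex_inj (mulIg h)) /=; apply: eq_bigr => g _.
rewrite invMg mulKVg.
under eq_bigr do rewrite actM_action.2.
by rewrite [RHS](reindex_inj (@actM_inj h)).
Qed.

Lemma Pobj_avgG (d : 'I_M -> op R A) (d' : gT -> 'I_M -> op R A) (Phi : tup R M A) :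
  (forall m, herm (d m)) -> (forall m, herm (Phi m)) ->
  (forall g m, hact g (d m) = d' g (actM g m)) ->
  Pobj d (avgG Phi) = #|gT|%:R^-1 * \sum_(g <- enum gT) Pobj (d' g) Phi.
Proof.
move=> hd hPhi hdd; rewrite /avgG Pobj_avgs -cardE; congr (_ * _).
by apply: eq_bigr => g _; exact: Pobj_tact.
Qed.

Lemma avg_const (x : R) : #|gT|%:R^-1 * \sum_(g <- enum gT) x = x.
Proof.
have n0 : (#|gT|%:R : R) != 0 by rewrite pnatr_eq0 -lt0n; apply/card_gt0P; exists 1%g.
rewrite big_const_seq count_predT -cardE iter_addr_0 -[x *+ _]mulr_natr.
by rewrite mulrC mulfK.
Qed.

Lemma Pobj_avgG_invariant (c : 'I_M -> op R A) (Phi : tup R M A) :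
  (forall m, herm (c m)) -> (forall m, herm (Phi m)) ->
  (forall g m, hact g (c m) = c (actM g m)) ->
  Pobj c (avgG Phi) = Pobj c Phi.
Proof.
by move=> hc hPhi hcc; rewrite (@Pobj_avgG c (fun=> c)) // avg_const.
Qed.

Lemma eta_avgG (Jn : nat) (actJ : gT -> 'I_Jn -> 'I_Jn) (a : 'I_Jn -> 'I_M -> op R A)
    (b : 'I_Jn -> R) (Phi : tup R M A) :
  (forall j m, herm (a j m)) -> (forall m, herm (Phi m)) ->
  (forall g j m, hact g (a j m) = a (actJ g j) (actM g m)) ->
  (forall g j, b j = b (actJ g j)) ->
  (forall j, eta_j a b j Phi <= 0) -> forall j, eta_j a b j (avgG Phi) <= 0.
Proof.
move=> ha hPhi haa hbb heta j.
change (Pobj (a j) (avgG Phi) - b j <= 0).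
rewrite (@Pobj_avgG (a j) (fun g => a (actJ g j))) // subr_le0.
have bound : \sum_(g <- enum gT) Pobj (a (actJ g j)) Phi <= \sum_(g <- enum gT) b j.
  by apply: ler_sum => g _; rewrite (hbb g j) -subr_le0; exact: heta.
apply: le_trans (ler_wpM2l _ bound) _; first by rewrite invr_ge0 ler0n.
by rewrite avg_const.
Qed.

End GroupAverage.

Section Closure.
Variable R : realType.
Local Notation C := R[i].
Variables (A : finType) (M : nat).

Lemma tclosure_sub (S : set (tup R M A)) : S `<=` tclosure S.
Proof.
move=> Phi hPhi e e0; exists Phi; split => // m i j.
by rewrite subrr normr0 ltcE /= eqxx e0.
Qed.

(* The l^1 norm of the entries of c, a Lipschitz constant for Pobj c. *)
Definition coef_sum (c : 'I_M -> op R A) : C := \sum_(m < M) \sum_i \sum_k `|c m k i|.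
Definition coef_norm (c : 'I_M -> op R A) : R := complex.Re (coef_sum c).

Lemma coef_sum_ge0 (c : 'I_M -> op R A) : 0 <= coef_sum c.
Proof. by do 3! (apply: sumr_ge0 => ? _). Qed.

Lemma coef_normE (c : 'I_M -> op R A) : rC (coef_norm c) = coef_sum c.
Proof. exact/RRe_real/ger0_real/coef_sum_ge0. Qed.

Lemma coef_norm_ge0 (c : 'I_M -> op R A) : 0 <= coef_norm c.
Proof. by have := coef_sum_ge0 c; rewrite -coef_normE lecE /= eqxx. Qed.

Lemma Pobj_lipschitz (c : 'I_M -> op R A) (Phi Psi : tup R M A) (e : R) :
  (forall m i j, `|Phi m i j - Psi m i j| < rC e) ->
  Pobj c Phi <= Pobj c Psi + e * coef_norm c.
Proof.
move=> close; rewrite -lerBlDl.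
pose D m : op R A := fun i j => Phi m i j - Psi m i j.
pose z := \sum_(m < M) hs (D m) (c m).
have -> : Pobj c Phi - Pobj c Psi = complex.Re z.
  rewrite /Pobj.
  have -> : \sum_(m < M) hs (Phi m) (c m) = z + \sum_(m < M) hs (Psi m) (c m).
    rewrite /z -big_split; apply: eq_bigr => m _ /=; rewrite -hs_add; congr hs.
    by apply: op_ext => i j; rewrite /D subrK.
  by rewrite ReD addrK.
have hz : `|z| <= rC e * coef_sum c.
  apply: le_trans (ler_norm_sum _ _ _) _.
  rewrite /coef_sum !big_distrr /=; apply: ler_sum => m _.
  rewrite /hs /tr /opmul; apply: le_trans (ler_norm_sum _ _ _) _.
  rewrite big_distrr /=; apply: ler_sum => i _.
  apply: le_trans (ler_norm_sum _ _ _) _.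
  rewrite big_distrr /=; apply: ler_sum => k _.
  by rewrite normrM; apply: ler_wpM2r => //; exact: ltW (close m i k).
rewrite -lecR; apply: (le_trans _ (le_trans (normc_ge_Re z) _)).
  by rewrite lecR ler_norm.
by apply: le_trans hz _; rewrite -coef_normE -rCM.
Qed.

Lemma Pobj_closure_approx (c : 'I_M -> op R A) (S : set (tup R M A)) (Phi : tup R M A) :
  tclosure S Phi -> forall e : R, 0 < e -> exists2 Psi, S Psi & Pobj c Phi <= Pobj c Psi + e.
Proof.
move=> hcl e e0.
have K1 : 0 < coef_norm c + 1 by rewrite ltr_wpDl // coef_norm_ge0.
have [Psi [hS close]] := hcl (e / (coef_norm c + 1)) (divr_gt0 e0 K1).
exists Psi => //; apply: le_trans (Pobj_lipschitz c close) _; rewrite lerD2l.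
rewrite mulrAC ler_pdivrMr // ler_wpM2l ?ltW //.
by rewrite ltrDl.
Qed.

Lemma sup_closure_le (c : 'I_M -> op R A) (S Q : set (tup R M A)) :
  Q `<=` tclosure S ->
  (ereal_sup [set (Pobj c Phi)%:E | Phi in Q] <= ereal_sup [set (Pobj c Phi)%:E | Phi in S])%E.
Proof.
move=> QS; apply: ge_ereal_sup => _ [Phi hQ <-].
apply/lee_addgt0Pr => e e0.
have [Psi hPsi hle] := Pobj_closure_approx c (QS _ hQ) e0.
apply: (@le_trans _ _ ((Pobj c Psi)%:E + e%:E)); first by rewrite -EFinD lee_fin.
by rewrite leeD2r //; apply: ereal_sup_ubound; exists Psi.
Qed.

End Closure.

Theorem proposition2
  (R : realType) (gT : finGroupType)
  (T : nat) (hT : (0 < T)%N) (dV dW : nat -> nat)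
  (hdV : forall t, (0 < t <= T)%N -> (0 < dV t)%N)
  (hdW : forall t, (0 < t <= T)%N -> (0 < dW t)%N)
  (M : nat) (hM : (2 <= M)%N) (Jn : nat)
  (c : 'I_M -> op R (Jt dV dW T)) (a : 'I_Jn -> 'I_M -> op R (Jt dV dW T)) (b : 'I_Jn -> R)
  (hc : forall m, herm (c m)) (ha : forall j m, herm (a j m))
  (Tset Cset : set (tup R M (Jt dV dW T)))
  (* C_G, T_G *)
  (TG : set (tup R M (Jt dV dW T)) :=
     [set Phi | (forall m, psd (Phi m)) /\ SG (tsum Phi)])
  (Psf : set (tup R M (Jt dV dW T)) :=
     [set Phi | Tset Phi /\ forall j, eta_j a b j Phi <= 0])
  (* standing assumptions *)
  (hTne : Tset !=set0) (hTconv : tconvex Tset) (hTsub : Tset `<=` TG)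
  (hPcl : tclosure Psf = [set Phi | tclosure Tset Phi /\ forall j, eta_j a b j Phi <= 0])
  (hCsub : forall Phi, Cset Phi -> forall m, psd (Phi m))
  (hCcl : tclosed Cset) (hCconv : tconvex Cset) (hCcone : tcone Cset)
  (* S = S_G *)
  (hTcl : tclosure Tset = [set Phi | Cset Phi /\ SG (tsum Phi)])
  (* the symmetry *)
  (actM : gT -> 'I_M -> 'I_M) (actJ : gT -> 'I_Jn -> 'I_Jn)
  (hact : gT -> op R (Jt dV dW T) -> op R (Jt dV dW T))
  (hsym : G_symmetric Tset Cset (@SG R dV dW T) a b c actM actJ hact)
  (hI : forall g, hact g (opI _) = opI _)
  (* subgroups H^(t) and irreducible projective representations on V_t
     (index t : 'I_T stands for level t+1) *)
  (H : nat -> {group gT}) (U : forall t : nat, gT -> uop R 'I_(dV t.+1))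
  (hrep : forall t : 'I_T, proj_rep (H t) (U t))
  (hirr : forall t : 'I_T, irreducible_rep (H t) (U t))
  (hcov : forall (t : 'I_T) h, h \in H t -> forall X, herm X ->
     outer_tr (ltn_ord t) (hact h X) = Ad_id (U t h) (outer_tr (ltn_ord t) X)) :
  ereal_sup [set (Pobj c Phi)%:E | Phi in Psf] =
  ereal_sup [set (Pobj c Phi)%:E | Phi in
     [set Phi | Cset Phi /\
        tsum Phi = opscale (NVprod dV T)%:R^-1 (opI (Jt dV dW T)) /\
        forall j, eta_j a b j Phi <= 0]].
Proof.
have [hMa [_ [hact_a [hTinv [_ [_ [haeq [hbeq hceq]]]]]]]] := hsym.
have psd_herm (Phi : tup R M (Jt dV dW T)) :
  (forall m, psd (Phi m)) -> forall m, herm (Phi m) by move=> hpsd m; case: (hpsd m).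
apply/eqP; rewrite eq_le; apply/andP; split.
  (* Averaging a feasible point over G gives a point of the restricted problem
     with the same objective value. *)
  apply: ereal_sup_le => _ [Phi [hTP heta] <-].
  have hPhi := psd_herm _ (hTsub _ hTP).1.
  pose Pb := avgG hact actM Phi.
  have hTPb : Tset Pb.
    apply: (conv_avg hTconv); last by move=> g; exact: hTinv.
    by rewrite -cardE; apply/card_gt0P; exists 1%g.
  have [hPb hSGPb] := hTsub _ hTPb.
  have herm_sum_Pb : herm (tsum Pb) by apply: herm_sum; exact: psd_herm.
  have sum_mixed : tsum Pb = opscale (NVprod dV T)%:R^-1 (opI _).
    apply: (SG_invariant_mixed hdV hdW (fun t => (hrep t).1) hirr hSGPb) => t h hH.
    by rewrite -hcov // avgG_invariant.
  exists Pb; last by rewrite Pobj_avgG_invariant.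
  split; [|split] => //; last exact: eta_avgG.
  by move: (tclosure_sub hTPb); rewrite hTcl => -[].
(* Every point of the restricted problem lies in the closure of the feasible set. *)
apply: sup_closure_le => Phi [hC [hsum heta]].
rewrite hPcl; split => //; rewrite hTcl; split => //.
by rewrite hsum; exact: SG_mixed.
Qed.
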